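(* Let $\beta\in\mathbb{F}_{p^m}\setminus\{0\}$ and $\mathcal{R}_{\alpha,\beta}=R[x]/\langle x^{4p^s}-(\alpha+\beta u)\rangle$. Let $P(x)=ax^3+bx^2+cx+d\in\mathbb{F}_{p^m}[x]$ be a nonzero polynomial. Then $P(x)$ is a unit in $\mathcal{R}_{\alpha,\beta}$ if and only if $$P(x)\notin \left\langle x^2+\gamma x+\tfrac{\gamma^2}{2}\right\rangle\cup\left\langle x^2-\gamma x+\tfrac{\gamma^2}{2}\right\rangle$$ (ideals of $\mathcal{R}_{\alpha,\beta}$). As a consequence, $\langle x^4-\alpha_0\rangle\subsetneq\langle x^2+\gamma x+\frac{\gamma^2}{2}\rangle$ and $\langle x^4-\alpha_0\rangle\subsetneq\langle x^2-\gamma x+\frac{\gamma^2}{2}\rangle$ in $\mathcal{R}_{\alpha,\beta}$.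
   Context: Let $p$ be an odd prime and $m,s$ positive integers with $p^m\equiv 3\pmod 4$; $\mathbb{F}_{p^m}$ is the field with $p^m$ elements and $R=\mathbb{F}_{p^m}[u]/\langle u^2\rangle$. Fix $\alpha\in\mathbb{F}_{p^m}\setminus\{0\}$ that is not a square in $\mathbb{F}_{p^m}$, let $\alpha_0\in\mathbb{F}_{p^m}$ satisfy $\alpha_0^{p^s}=\alpha$, and let $\gamma\in\mathbb{F}_{p^m}$ satisfy $\gamma^4+4\alpha_0=0$. *)

From HB Require Import structures.
From mathcomp Require Import all_boot all_order all_algebra all_field.
Set Implicit Arguments. Unset Strict Implicit. Unset Printing Implicit Defensive.
Import GRing.Theory.
Local Open Scope ring_scope.

(* Elements of R[x], R = F[u]/<u^2>, and of R_{alpha,beta} are represented by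
   bivariate polynomials in F[x][u] : {poly {poly F}}.  The OUTER variable
   'X of {poly {poly F}} is u; the inner variable (('X : {poly F})%:P) is x.
   R_{alpha,beta} = F[x,u] / < u^2 , x^N - (alpha + beta u) >. *)

Definition liftx (F : fieldType) (f : {poly F}) : {poly {poly F}} := f%:P.

Definition Rab_mod (F : fieldType) (N : nat) (alpha beta : F) : {poly {poly F}} :=
  liftx ('X^N - alpha%:P) - liftx (beta%:P) * 'X.

Definition in_ideal_Rab (F : fieldType) (N : nat) (alpha beta : F)
  (g f : {poly {poly F}}) : Prop :=
  exists h q1 q2 : {poly {poly F}},
    f = g * h + q1 * 'X^2 + q2 * Rab_mod N alpha beta.

Definition unit_Rab (F : fieldType) (N : nat) (alpha beta : F)
  (f : {poly {poly F}}) : Prop :=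
  exists h q1 q2 : {poly {poly F}},
    f * h = 1 + q1 * 'X^2 + q2 * Rab_mod N alpha beta.

Definition ideal_proper_Rab (F : fieldType) (N : nat) (alpha beta : F)
  (g1 g2 : {poly {poly F}}) : Prop :=
  (forall f, in_ideal_Rab N alpha beta g1 f -> in_ideal_Rab N alpha beta g2 f) /\
  (exists f, in_ideal_Rab N alpha beta g2 f /\ ~ in_ideal_Rab N alpha beta g1 f).

From HB Require Import structures.
From mathcomp Require Import all_boot all_order all_algebra all_field.
From mathcomp Require Import ring.
Set Implicit Arguments.
Unset Strict Implicit.
Unset Printing Implicit Defensive.

Import GRing.Theory.
Local Open Scope ring_scope.

(* Setting u = 0 maps R_{alpha,beta} onto F[x]/<x^N - alpha> with a kernel of
   square zero, so units of R_{alpha,beta}, and membership in ideals generated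
   by divisors of x^N - alpha, are read off in F[x].  In characteristic p,
   x^N - alpha = (x^4 - alpha0)^(p^s), and the Sophie Germain identity splits
   x^4 - alpha0 into the two quadratics of the statement; both are irreducible
   because their discriminant -gamma^2 is not a square, -1 being a non-square
   when #|F| = 3 mod 4.  Hence P is a unit iff it is divisible by neither. *)

Section QuotientByU.
Variables (F : fieldType) (N : nat) (alpha beta : F).
Implicit Types f g : {poly F}.

Local Notation M := ('X^N - alpha%:P).

Lemma horner0_Rab_relation (r q1 q2 : {poly {poly F}}) :
  (r + q1 * 'X^2 + q2 * Rab_mod N alpha beta).[0] = r.[0] + q2.[0] * M.
Proof.
rewrite /Rab_mod /liftx !(hornerD, hornerM, hornerN, hornerC, hornerX, hornerXn).
by rewrite !mulr0 subr0 addr0.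
Qed.

Lemma in_ideal_Rab_liftxP g f :
  g %| M -> in_ideal_Rab N alpha beta (liftx g) (liftx f) <-> g %| f.
Proof.
move=> gM; split => [[h [q1 [q2 /(congr1 (horner^~ 0))]]] | gf].
  by rewrite horner0_Rab_relation hornerM /liftx !hornerC => ->;
     rewrite dvdp_add ?dvdp_mulIl ?dvdp_mull.
exists (liftx (f %/ g)), 0, 0.
by rewrite !mul0r !addr0 /liftx -rmorphM mulrC divpK.
Qed.

Lemma unit_Rab_liftxP f : unit_Rab N alpha beta (liftx f) <-> coprimep f M.
Proof.
split => [[h [q1 [q2 /(congr1 (horner^~ 0))]]] | ].
  rewrite horner0_Rab_relation hornerM /liftx !hornerC => E.
  apply/Bezout_eq1_coprimepP; exists (h.[0], - q2.[0]) => /=.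
  by rewrite mulrC E mulNr addrK.
case/Bezout_eq1_coprimepP => -[a b] /= Bezout.
have fa : liftx f * liftx a = 1 - liftx b * liftx M.
  by rewrite /liftx -!rmorphM -rmorphB -Bezout addrK mulrC.
(* Modulo [Rab_mod], [M] is [beta u], and [1 - b beta u] has inverse
   [1 + b beta u] because [u^2 = 0]. *)
set e := liftx b * liftx beta%:P * 'X.
exists (liftx a * (1 + e)), (- ((liftx b * liftx beta%:P) ^+ 2)), (- (liftx b * (1 + e))).
by rewrite mulrA fa /Rab_mod /e; ring.
Qed.

Lemma ideal_proper_Rab_liftx_mul g g' :
  g * g' %| M -> g != 0 -> (1 < size g')%N ->
  ideal_proper_Rab N alpha beta (liftx (g * g')) (liftx g).
Proof.
move=> ggM g0 sg'; have gM : g %| M := dvdp_trans (dvdp_mulr g' (dvdpp g)) ggM.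
split.
  move=> f [h [q1 [q2 ->]]]; exists (liftx g' * h), q1, q2.
  by rewrite /liftx rmorphM mulrA.
exists (liftx g); rewrite in_ideal_Rab_liftxP // in_ideal_Rab_liftxP // dvdpp.
by split=> //; rewrite -[X in _ %| X]mulr1 dvdp_mul2l // dvdp1 => /eqP sg'1; rewrite sg'1 in sg'.
Qed.

End QuotientByU.

Lemma irredp_coprimep (F : fieldType) (g f : {poly F}) :
  irreducible_poly g -> coprimep f g = ~~ (g %| f).
Proof.
move=> irr_g; apply/idP/idP => [cop_fg | /negP ndvd_gf].
  apply/negP => /coprimep_dvdr/(_ cop_fg); rewrite coprimepp => /eqP sg1.
  by case: irr_g; rewrite sg1.
rewrite coprimep_def; apply/negPn/negP => sgcd.
have /eqp_dvdl gcd_g := irr_g _ sgcd (dvdp_gcdr f g).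
by apply: ndvd_gf; rewrite -gcd_g dvdp_gcdl.
Qed.

Lemma coprimep_irredp_mul_exp (F : fieldType) (g1 g2 f : {poly F}) k :
  irreducible_poly g1 -> irreducible_poly g2 -> (0 < k)%N ->
  coprimep f ((g1 * g2) ^+ k) = ~~ (g1 %| f) && ~~ (g2 %| f).
Proof.
by move=> irr1 irr2 k_gt0; rewrite coprimep_pexpr // coprimepMr !irredp_coprimep.
Qed.

Lemma exp_XnsubC_pchar (F : fieldType) p n k (c : F) : p \in [pchar F] ->
  ('X^n - c%:P) ^+ (p ^ k) = 'X^(n * p ^ k) - (c ^+ (p ^ k))%:P.
Proof.
move=> pcharFp; have pk : [pchar {poly F}].-nat (p ^ k)%N.
  by rewrite pnatX (pnatE _ (pcharf_prime pcharFp)) pchar_poly pcharFp.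
by rewrite exprDn_pchar // exprNn_pchar // -exprM polyC_exp.
Qed.

Lemma sqrf_neqN1 (F : finFieldType) (y : F) :
  2%:R != 0 :> F -> (#|F| %% 4 = 3)%N -> y ^+ 2 != -1.
Proof.
move=> two_neq0 cardF; apply/eqP => y2.
have y4 : y ^+ 4 = 1 by rewrite (exprM y 2 2) y2 sqrrN expr1n.
(* y = y ^+ #|F| = y ^+ 3 = - y *)
have := expf_card y; rewrite (divn_eq #|F| 4) cardF exprD exprM exprAC y4 expr1n mul1r.
rewrite (exprS y 2) y2 mulrN1 => /eqP; rewrite eq_sym -subr_eq0 opprK -mulr2n -mulr_natl.
rewrite mulf_eq0 (negPf two_neq0) /= => /eqP y0.
by move: y2; rewrite y0 expr0n /= => /eqP; rewrite eq_sym oppr_eq0 oner_eq0.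
Qed.

Lemma irredp_quadratic (F : fieldType) (e c : F) :
  2%:R != 0 :> F -> (forall y, y ^+ 2 != e ^+ 2 - 4%:R * c) ->
  irreducible_poly ('X^2 + e *: 'X + c%:P).
Proof.
move=> two_neq0 disc_nsqr; apply: cubic_irreducible => [|x].
  rewrite -addrA size_polyDl size_polyXn //.
  rewrite (leq_ltn_trans (size_polyD _ _)) // gtn_max.
  by rewrite (leq_ltn_trans (size_scale_leq _ _)) ?size_polyX ?(leq_ltn_trans (size_polyC_leq1 _)).
apply/negP; rewrite rootE !hornerE => /eqP root_x.
apply/negP: (disc_nsqr (2%:R * x + e)); apply/negPn.
rewrite -subr_eq0 (_ : _ - _ = 4%:R * (x ^+ 2 + e * x + c)); last by ring.
by rewrite root_x mulr0.
Qed.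

Lemma irredp_sophie_germain_factor (F : finFieldType) (g e : F) :
  2%:R != 0 :> F -> (#|F| %% 4 = 3)%N -> g != 0 -> e ^+ 2 = g ^+ 2 ->
  irreducible_poly ('X^2 + e *: 'X + (g ^+ 2 / 2%:R)%:P).
Proof.
move=> two_neq0 cardF g_neq0 e2; apply: irredp_quadratic => // y; rewrite e2.
have -> : g ^+ 2 - 4%:R * (g ^+ 2 / 2%:R) = - g ^+ 2 by field.
apply: contra_neq (sqrf_neqN1 (y / g) two_neq0 cardF) => y2.
by rewrite expr_div_n y2 mulNr divff ?expf_neq0.
Qed.

Lemma sophie_germain_poly (F : fieldType) (g : F) : 2%:R != 0 :> F ->
  ('X^2 + g *: 'X + (g ^+ 2 / 2%:R)%:P) * ('X^2 - g *: 'X + (g ^+ 2 / 2%:R)%:P)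
    = 'X^4 + (g ^+ 4 / 4%:R)%:P.
Proof.
move=> two_neq0; rewrite -!mul_polyC.
set G := g%:P; set C := (g ^+ 2 / 2%:R)%:P.
have CC : C + C = G * G by rewrite -polyCD -polyCM; congr (_%:P); field.
have C2 : C * C = (g ^+ 4 / 4%:R)%:P.
  by rewrite -polyCM; congr (_%:P); field; rewrite (natrM _ 2 2) mulf_neq0.
have -> : ('X^2 + G * 'X + C) * ('X^2 - G * 'X + C) =
  'X^4 + (C + C - G * G) * 'X^2 + C * C by ring.
by rewrite CC C2 subrr mul0r addr0.
Qed.

Theorem proposition3p2 (F : finFieldType) (p m s : nat)
  (alpha alpha0 gamma beta a b c d : F) :
  prime p -> odd p -> (0 < m)%N -> (0 < s)%N ->
  #|F| = (p ^ m)%N -> (p ^ m %% 4 = 3)%N ->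
  alpha != 0 -> (forall y : F, y ^+ 2 != alpha) ->
  alpha0 ^+ (p ^ s) = alpha ->
  gamma ^+ 4 + 4%:R * alpha0 = 0 ->
  beta != 0 ->
  let N := (4 * p ^ s)%N in
  let P : {poly F} := a *: 'X^3 + b *: 'X^2 + c *: 'X + d%:P in
  let g1 : {poly F} := 'X^2 + gamma *: 'X + (gamma ^+ 2 / 2%:R)%:P in
  let g2 : {poly F} := 'X^2 - gamma *: 'X + (gamma ^+ 2 / 2%:R)%:P in
  P != 0 ->
  (unit_Rab N alpha beta (liftx P) <->
     ~ (in_ideal_Rab N alpha beta (liftx g1) (liftx P) \/
        in_ideal_Rab N alpha beta (liftx g2) (liftx P)))
  /\ ideal_proper_Rab N alpha beta (liftx ('X^4 - alpha0%:P)) (liftx g1)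
  /\ ideal_proper_Rab N alpha beta (liftx ('X^4 - alpha0%:P)) (liftx g2).
Proof.
move=> p_pr p_odd _ _ cardF cardF_mod4 alpha_neq0 _ alpha0_frob gamma4 _ N P g1 g2 _.
have pcharFp : p \in [pchar F] by apply: card_finPcharP cardF p_pr.
have two_neq0 : 2%:R != 0 :> F.
  by rewrite -(dvdn_pcharf pcharFp) dvdn_prime2 //; apply: contraTneq p_odd => ->.
have four_neq0 : 4%:R != 0 :> F by rewrite (natrM _ 2 2) mulf_neq0.
have alpha0_neq0 : alpha0 != 0.
  apply: contra_neq alpha_neq0 => alpha00.
  by rewrite -alpha0_frob alpha00 expr0n eqn0Ngt expn_gt0 prime_gt0.
have gamma4E : gamma ^+ 4 = - (4%:R * alpha0) by apply/eqP; rewrite -addr_eq0 gamma4.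
have gamma_neq0 : gamma != 0.
  have : gamma ^+ 4 != 0 by rewrite gamma4E oppr_eq0 mulf_neq0.
  by apply: contraNneq => ->; rewrite expr0n.
have g1g2 : g1 * g2 = 'X^4 - alpha0%:P.
  by rewrite sophie_germain_poly // gamma4E -polyCN; congr (_ + _%:P); field.
have mod_g1g2 : 'X^N - alpha%:P = (g1 * g2) ^+ (p ^ s).
  by rewrite g1g2 exp_XnsubC_pchar // alpha0_frob.
have cardF4 : (#|F| %% 4 = 3)%N by rewrite cardF.
have irr_g1 : irreducible_poly g1 by apply: irredp_sophie_germain_factor.
have irr_g2 : irreducible_poly g2.
  by rewrite /g2 -scaleNr; apply: irredp_sophie_germain_factor; rewrite ?sqrrN.
have g1g2_M : g1 * g2 %| 'X^N - alpha%:P by rewrite mod_g1g2 dvdp_exp ?expn_gt0 ?prime_gt0.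
have [[size_g1 _] [size_g2 _]] := (irr_g1, irr_g2).
split; [|split].
- rewrite unit_Rab_liftxP mod_g1g2 coprimep_irredp_mul_exp ?expn_gt0 ?prime_gt0 //.
  rewrite -negb_or !in_ideal_Rab_liftxP ?(dvdp_trans _ g1g2_M) ?dvdp_mulIl ?dvdp_mulIr //.
  by split=> [/negP nP /orP // | nP]; apply/negP => /orP.
- by rewrite -g1g2; apply: ideal_proper_Rab_liftx_mul; rewrite ?irredp_neq0.
- rewrite -g1g2 mulrC; apply: ideal_proper_Rab_liftx_mul; rewrite ?irredp_neq0 //.
  by rewrite mulrC.
Qed.
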